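(* Let $0\le\alpha<\alpha_{space}:=\min(v_0/4,\gamma/(2V^0))$, let $u_0\in C_\alpha$ and let $(s,u)$ be the solution of the free-interface problem with initial data $u_0$. Then for all $t>0$, $$|T_1(t)u_0|_\alpha\le V^0/\sqrt\gamma .$$
   Context: Fix $\gamma>0$, $0<v_0\le V^0$. The kinetics $g:[0,\infty)\to\mathbb{R}$ is monotonically decreasing, differentiable, $|g'|\le C$, $-V^0\le g\le -v_0$. Free-interface problem: find $s(t)$, $s(0)=0$, and $u(x,t)$ with $u_t=u_{xx}-\gamma u$ for $x\ne s(t)$, $t>0$; $u(x,0)=u_0(x)$; $g(u(s(t),t))=v(t)$; $u_x^+(s(t),t)-u_x^-(s(t),t)=v(t)$, with $v=s'$, $u_x^\pm$ one-sided derivatives, $u\to0$ at $\pm\infty$; the classical solution exists and is unique, and $-V^0\le v(t)\le -v_0$. With $G(x,t,\xi,\tau)=[4\pi(t-\tau)]^{-1/2}\exp\{-(x-\xi)^2/(4(t-\tau))\}$, define $(T_1(t)u_0)(x)=-\int_0^t e^{-\gamma(t-\tau)}G(x,t,s(\tau),\tau)v(\tau)d\tau$ (the free-interface contribution to $u$). Weighted norms: $|f|_\alpha=\sup_x e^{\alpha|x|}|f(x)|$, $C_\alpha=\{f\in C(\mathbb{R}):|f|_\alpha<\infty\}$; for a function $f(\cdot,t)$ associated with the solution at time $t$, $|f(\cdot,t)|_\alpha:=\sup_x e^{\alpha|x-s(t)|}|f(x,t)|$. *)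

From HB Require Import structures.
From mathcomp Require Import all_boot all_order all_algebra.
From mathcomp Require Import all_classical all_reals all_analysis.
Set Implicit Arguments. Unset Strict Implicit. Unset Printing Implicit Defensive.
Import Order.TTheory GRing.Theory Num.Theory.
Import numFieldNormedType.Exports.
Local Open Scope classical_set_scope.
Local Open Scope ring_scope.

Section FreeInterface.
Variable R : realType.

Definition heatG (x t xi tau : R) : R :=
  (Num.sqrt (4 * pi * (t - tau)))^-1 * expR (- ((x - xi) ^+ 2) / (4 * (t - tau))).

Definition time_interval (t : R) : set R := `[0, t]%classic.

(* (T_1(t) u_0)(x) = - int_0^t e^{-gamma (t - tau)} G(x,t,s(tau),tau) v(tau) dtau,
   as a Lebesgue integral (extended-real valued). *)
Definition T1 (gamma : R) (s v : R -> R) (x t : R) : \bar R :=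
  (\int[lebesgue_measure]_(tau in time_interval t)
     (- (expR (- gamma * (t - tau)) * heatG x t (s tau) tau * v tau))%:E)%E.

Definition in_C_alpha (alpha : R) (f : R -> R) : Prop :=
  continuous f /\ exists M : R, forall x, expR (alpha * `|x|) * `|f x| <= M.

Definition kinetics (v0 V0 C : R) (g : R -> R) : Prop :=
  (forall x y, 0 <= x -> x <= y -> g y <= g x) /\
  (forall x, 0 < x -> derivable g x 1) /\
  (forall x, 0 < x -> `|derive1 g x| <= C) /\
  (forall x, 0 <= x -> - V0 <= g x <= - v0).

Definition has_right_dx (u : R -> R -> R) (a t l : R) : Prop :=
  (fun h => (u (a + h) t - u a t) / h) @ 0^'+ --> l.
Definition has_left_dx (u : R -> R -> R) (a t l : R) : Prop :=
  (fun h => (u (a + h) t - u a t) / h) @ 0^'- --> l.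

Definition free_interface_solution (gamma : R) (g u0 : R -> R)
    (s v : R -> R) (u : R -> R -> R) : Prop :=
  s 0 = 0 /\
  {within [set t | 0 <= t], continuous s} /\
  (forall t, 0 < t -> derivable s t 1 /\ derive1 s t = v t) /\
  {within [set p : R * R | 0 <= p.2], continuous (fun p : R * R => u p.1 p.2)} /\
  (forall x, u x 0 = u0 x) /\
  (forall t x, 0 < t -> x != s t ->
     derivable (fun tau => u x tau) t 1 /\
     derivable (fun y => u y t) x 1 /\
     derivable (derive1 (fun z => u z t)) x 1 /\
     derive1 (fun tau => u x tau) t
       = derive1 (derive1 (fun z => u z t)) x - gamma * u x t) /\
  (forall t, 0 < t -> g (u (s t) t) = v t) /\
  (forall t, 0 < t -> exists lp lm,
     has_right_dx u (s t) t lp /\ has_left_dx u (s t) t lm /\ lp - lm = v t) /\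
  (forall t, 0 < t ->
     (fun x => u x t) @ +oo --> 0 /\ (fun x => u x t) @ -oo --> 0).

End FreeInterface.

From HB Require Import structures.
From mathcomp Require Import all_boot all_order all_algebra.
From mathcomp Require Import all_classical all_reals all_analysis.
From mathcomp Require Import ring lra.
From mathcomp Require Import measurable_realfun.
Import Order.TTheory GRing.Theory Num.Theory.
Import numFieldNormedType.Exports.
Local Open Scope classical_set_scope.
Local Open Scope ring_scope.

(* The velocity bound |s'| <= V0 gives |s(tau) - s(t)| <= V0 (t - tau), so
   completing the square absorbs the weight e^{alpha |x - s(t)|} into the
   Gaussian factor of the heat kernel, at the cost of a factor
   e^{(alpha V0 + alpha^2) (t - tau)}.  The weighted integrand of T_1 is then
   dominated by V0 (4 pi (t - tau))^{-1/2} e^{-c (t - tau)}, where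
   c = gamma - alpha V0 - alpha^2 >= gamma / 4, and the substitution
   t - tau = r^2 / c bounds its integral through the Gaussian integral by
   V0 / (2 sqrt c) <= V0 / sqrt gamma. *)

Lemma abse_subr_le {R : realType} (a b M : \bar R) :
  (0 <= a <= M)%E -> (0 <= b <= M)%E -> (`|a - b| <= M)%E.
Proof.
case: M => [M| |] /andP[a0 aM] /andP[b0 bM]; last 2 first.
- by rewrite leey.
- by move: (le_trans a0 aM); rewrite leeNy_eq.
case: a a0 aM => [a| |] //; case: b b0 bM => [b| |] //.
rewrite !lee_fin => b0 bM a0 aM /=.
by rewrite ler_norml; apply/andP; split; lra.
Qed.

Section integral_without_measurability.
Local Open Scope ereal_scope.
Context d (T : measurableType d) (R : realType) (mu : {measure set T -> \bar R}).
Implicit Type D : set T.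

(* Nothing is known about the measurability of the integrand of [T1], which
   involves the arbitrary function [v]; nonnegative integrals are suprema over
   the simple functions below the integrand, hence monotone anyway. *)
Lemma ge0_le_integral_nonmeasurable D (f g : T -> \bar R) :
  (forall x, D x -> 0 <= f x) -> (forall x, D x -> f x <= g x) ->
  \int[mu]_(x in D) f x <= \int[mu]_(x in D) g x.
Proof.
move=> f0 fg.
have g0 x : D x -> 0 <= g x by move=> Dx; exact: le_trans (f0 _ Dx) (fg _ Dx).
rewrite (ge0_integralE mu f0) (ge0_integralE mu g0).
apply: ereal_sup_le => _ [h hf <-]; exists h => //= x.
apply: le_trans (hf x) _; rewrite /patch; case: ifP => // /[!inE] Dx.
exact: fg.
Qed.

Lemma abse_integral_le D (f g : T -> R) :
  (forall x, D x -> `|f x| <= g x)%R ->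
  `|\int[mu]_(x in D) (f x)%:E| <= \int[mu]_(x in D) (g x)%:E.
Proof.
move=> fg; have g0 x : D x -> (0 <= g x)%R.
  by move=> Dx; exact: le_trans (normr_ge0 _) (fg _ Dx).
rewrite integralE; apply: abse_subr_le; apply/andP; split.
- by apply: integral_ge0 => x _; exact: funepos_ge0.
- apply: ge0_le_integral_nonmeasurable => x Dx; first exact: funepos_ge0.
  rewrite funeposE -EFin_max lee_fin ge_max g0 // andbT.
  exact: le_trans (ler_norm _) (fg _ Dx).
- by apply: integral_ge0 => x _; exact: funeneg_ge0.
- apply: ge0_le_integral_nonmeasurable => x Dx; first exact: funeneg_ge0.
  rewrite funenegE -EFinN -EFin_max lee_fin ge_max g0 // andbT.
  by apply: le_trans (fg _ Dx); rewrite -normrN; exact: ler_norm.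
Qed.

End integral_without_measurability.

Lemma integral_gauss_itv_le {R : realType} (k a b : R) : 0 <= k -> 0 <= a ->
  (\int[lebesgue_measure]_(r in `[a, b]) (k * gauss_fun r)%:E
     <= (k * (Num.sqrt pi / 2))%:E)%E.
Proof.
move=> k0 a0.
have sub0y : `[a, b] `<=` (`[0%R, +oo[ : set R).
  by move=> x /=; rewrite !in_itv /= andbT => /andP[ax _]; exact: le_trans ax.
have mgauss : measurable_fun (`[0%R, +oo[ : set R) (EFin \o gauss_fun).
  by apply/measurable_EFinP; exact: measurable_funTS measurable_gauss_fun.
under eq_integral do rewrite EFinM.
rewrite ge0_integralZl //; last 2 first.
- exact: measurable_funS mgauss.
- by move=> x _; rewrite lee_fin gauss_fun_ge0.
rewrite EFinM lee_wpmul2l ?lee_fin // -integral0y_gauss.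
by apply: ge0_subset_integral => // x _; rewrite lee_fin gauss_fun_ge0.
Qed.

Section sqrt_kernel_integral.
Context (R : realType) (t c K : R).
Hypotheses (t0 : 0 < t) (c0 : 0 < c) (K0 : 0 <= K).

Let Phi (tau : R) := K / Num.sqrt (t - tau) * expR (- c * (t - tau)).

(* The substitution [tau = t - r ^+ 2 / c] removes the singularity at [tau = t]
   and turns [Phi] into a multiple of the Gaussian. *)
Let F (r : R) := t - r ^+ 2 / c.

Let Phi_ge0 tau : 0 <= Phi tau.
Proof. by rewrite mulr_ge0 ?expR_ge0 // divr_ge0 // sqrtr_ge0. Qed.

Let Phi_continuous tau : tau < t -> {for tau, continuous Phi}.
Proof.
move=> taut; apply: cvgM; last first.
  apply: continuous_comp; last exact: continuous_expR.
  apply: cvgM; first exact: cvg_cst.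
  by apply: cvgB; [exact: cvg_cst | exact: cvg_id].
apply: cvgM; first exact: cvg_cst.
apply: cvgV; first by rewrite sqrtr_eq0 -ltNge subr_gt0.
apply: continuous_comp; last exact: sqrt_continuous.
by apply: cvgB; [exact: cvg_cst | exact: cvg_id].
Qed.

Let is_derive_F (r : R) : is_derive r 1 F (- (r *+ 2 / c)).
Proof.
apply: is_derive_eq.
rewrite add0r mul1r scaler0 add0r -mulr2n.
by rewrite -[c^-1 *: _]/(c^-1 * _) -[r%:A]/(r * 1) mulr1 mulrC.
Qed.

Let derive1_F : F^`()%classic = fun r => - (r *+ 2 / c).
Proof. by apply/funext => r; rewrite derive1E; case: (is_derive_F r). Qed.

Let F_continuous (r : R) : {for r, continuous F}.
Proof.
apply: cvgB; first exact: cvg_cst.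
by apply: cvgM; [exact: exprn_continuous | exact: cvg_cst].
Qed.

Let derive1_F_continuous (r : R) : {for r, continuous F^`()%classic}.
Proof.
by rewrite derive1_F; apply: cvgN; apply: cvgM; [exact: cvgMn | exact: cvg_cst].
Qed.

Let Phi_F (r : R) : 0 < r ->
  Phi (F r) * (r *+ 2 / c) = 2 * K / Num.sqrt c * gauss_fun r.
Proof.
move=> r0; have sc0 : 0 < Num.sqrt c by rewrite sqrtr_gt0.
rewrite /Phi /F /gauss_fun (_ : t - (t - r ^+ 2 / c) = r ^+ 2 / c); last by ring.
rewrite sqrtrM ?sqr_ge0 // sqrtr_sqr ger0_norm ?ltW // sqrtrV ?ltW //.
rewrite (_ : - c * (r ^+ 2 / c) = - r ^+ 2); last by field; exact: lt0r_neq0.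
rewrite -[X in r *+ 2 / X](sqr_sqrtr (ltW c0)) mulr2n.
by field; rewrite !lt0r_neq0.
Qed.

Let integral_sqrt_kernel_substitution a b : 0 < a -> a <= b ->
  (\int[lebesgue_measure]_(tau in `[F b, F a]) (Phi tau)%:E =
   \int[lebesgue_measure]_(r in `[a, b]) (2 * K / Num.sqrt c * gauss_fun r)%:E)%E.
Proof.
move=> a0 ab; rewrite integration_by_substitution_decreasing //.
- apply: eq_integral => r /[!inE] /= /[!in_itv] /= /andP[ar _].
  by rewrite derive1_F opprK; congr EFin; apply: Phi_F; lra.
- move=> x y /[!in_itv] /= /andP[ax _] /andP[ay _] xy.
  rewrite /F ltrD2l ltrN2 ltr_pM2r ?invr_gt0 // -subr_gt0 subr_sqr.
  by rewrite mulr_gt0 ?subr_gt0 //; lra.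
- by move=> x _; exact: derive1_F_continuous.
- by apply/cvg_ex; eexists; exact: cvg_at_right_filter (derive1_F_continuous a).
- by apply/cvg_ex; eexists; exact: cvg_at_left_filter (derive1_F_continuous b).
- split; first by move=> x _; case: (is_derive_F x).
  + exact: cvg_at_right_filter (F_continuous a).
  + exact: cvg_at_left_filter (F_continuous b).
- apply: continuous_in_subspaceT => x /[!inE] /= /[!in_itv] /= /andP[_ xFa].
  apply: Phi_continuous; apply: (le_lt_trans xFa).
  by rewrite /F ltrBlDr ltrDl divr_gt0 // exprn_gt0.
Qed.

Let integral_Phi_itv_le (e : R) : 0 < e -> e <= t - e ->
  (\int[lebesgue_measure]_(tau in `[e, (t - e)%R]) (Phi tau)%:E
     <= (K * Num.sqrt pi / Num.sqrt c)%:E)%E.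
Proof.
move=> e0 ete; set a := Num.sqrt (c * e); set b := Num.sqrt (c * (t - e)).
have Fa : F a = t - e.
  by rewrite /F sqr_sqrtr ?mulr_ge0 ?ltW //; field; exact: lt0r_neq0.
have Fb : F b = e.
  rewrite /F sqr_sqrtr; last by rewrite mulr_ge0 ?ltW //; lra.
  by field; exact: lt0r_neq0.
have a0 : 0 < a by rewrite sqrtr_gt0 mulr_gt0.
have ab : a <= b by rewrite ler_sqrt ?ler_pM2l // mulr_ge0 ?ltW //; lra.
rewrite -Fa -{1}Fb integral_sqrt_kernel_substitution //.
have k0 : 0 <= 2 * K / Num.sqrt c by rewrite divr_ge0 ?mulr_ge0 ?sqrtr_ge0.
apply: le_trans (integral_gauss_itv_le _ a b k0 (ltW a0)) _.
rewrite lee_fin le_eqVlt; apply/orP; left; apply/eqP.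
by field; rewrite lt0r_neq0 ?sqrtr_gt0.
Qed.

Let e (n : nat) : R := t / n.+2%:R.

Let e_gt0 n : 0 < e n.
Proof. by rewrite divr_gt0 // ltr0n. Qed.

Let e_le n : e n <= t - e n.
Proof.
suff : 2 * e n <= t by lra.
by rewrite mulrA ler_pdivrMr ?ltr0n // [2 * t]mulrC ler_pM2l // ler_nat.
Qed.

Let itv_oo_bigcup : `]0, t[%classic = \bigcup_n `[e n, t - e n]%classic.
Proof.
apply/seteqP; split => [x /=|x [n _] /=]; rewrite !in_itv /=; last first.
  by move=> /andP[? ?]; have := e_gt0 n => ?; apply/andP; split; lra.
move=> /andP[x0 xt]; pose m := Num.min x (t - x).
have m0 : 0 < m by rewrite lt_min x0 subr_gt0.
exists (Num.truncn (t / m)) => //=; rewrite in_itv /=.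
have : e (Num.truncn (t / m)) < m.
  rewrite /e ltr_pdivrMr ?ltr0n // mulrC -ltr_pdivrMr //.
  by apply: lt_trans (truncnS_gt _) _; rewrite ltr_nat.
have : m <= x by rewrite ge_min lexx.
have : m <= t - x by rewrite ge_min lexx orbT.
by move=> *; apply/andP; split; lra.
Qed.

Let itv_nondecreasing : nondecreasing_seq (fun n => `[e n, t - e n]%classic).
Proof.
move=> n m nm; rewrite subsetEset => x /=; rewrite !in_itv /= => /andP[? ?].
have : e m <= e n.
  by rewrite ler_pM2l // lef_pV2 ?posrE ?ltr0n // ler_nat !ltnS.
by move=> ?; apply/andP; split; lra.
Qed.

Let measurable_Phi : measurable_fun `]0, t[ Phi.
Proof.
apply: open_continuous_measurable_fun; first exact: interval_open.
by move=> x /[!inE] /= /[!in_itv] /= /andP[_ xt]; exact: Phi_continuous.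
Qed.

Lemma integral_sqrt_kernel_le (g : R -> R) : {in `]0, t[, g =1 Phi} ->
  (\int[lebesgue_measure]_(tau in `[0%R, t]) (g tau)%:E
     <= (K * Num.sqrt pi / Num.sqrt c)%:E)%E.
Proof.
move=> gPhi.
have mg : measurable_fun `]0, t[ g.
  by apply: eq_measurable_fun measurable_Phi => x /[!inE] xt; rewrite gPhi.
rewrite (eq_integral_itv_bounded (g := Phi)) //.
rewrite integral_itv_bndoo; last exact/measurable_EFinP.
have mPhi n : measurable_fun `[e n, t - e n] (EFin \o Phi).
  apply/measurable_EFinP; apply: measurable_funS measurable_Phi => //.
  by rewrite itv_oo_bigcup => x ?; exists n.
have Phi_cvg := ge0_nondecreasing_set_cvg_integral (mu := lebesgue_measure)
  itv_nondecreasing (fun n => measurable_itv _) mPhi (fun _ x _ => Phi_ge0 x).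
rewrite itv_oo_bigcup -(cvg_lim _ Phi_cvg) //.
apply: lime_le; first by apply/cvg_ex; eexists; exact: Phi_cvg.
by apply: nearW => n; exact: integral_Phi_itv_le.
Qed.

End sqrt_kernel_integral.

Lemma MVT_norm_le {R : realType} (f : R -> R) (L a b : R) : a < b ->
  {within `[a, b], continuous f} ->
  (forall x, a < x < b -> derivable f x 1 /\ `|f^`()%classic x| <= L) ->
  `|f b - f a| <= L * (b - a).
Proof.
move=> ab fc fd.
have f_is_derive x : x \in `]a, b[ -> is_derive x 1 f (f^`()%classic x).
  by rewrite in_itv /= => /fd[df _]; apply: DeriveDef => //; rewrite derive1E.
have [y /[!in_itv] /= yab ->] := MVT ab f_is_derive fc.
have ba0 : 0 <= b - a by rewrite subr_ge0 ltW.
by rewrite normrM (ger0_norm ba0) ler_wpM2r //; case: (fd y yab).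
Qed.

Lemma sqrt_4piM {R : realType} (sg : R) : 0 <= sg ->
  Num.sqrt (4 * pi * sg) = 2 * Num.sqrt pi * Num.sqrt sg.
Proof.
move=> sg0; have -> : 4 * pi * sg = (2 * Num.sqrt pi * Num.sqrt sg) ^+ 2.
  by rewrite !exprMn !sqr_sqrtr ?pi_ge0 //; ring.
by rewrite sqrtr_sqr ger0_norm // !mulr_ge0 // sqrtr_ge0.
Qed.

(* Completing the square: [alpha |y| <= y^2 / (4 sg) + alpha^2 sg]. *)
Lemma weighted_norm_le_gauss_exponent {R : realType} {alpha sg : R} (V0 y z : R) :
  0 <= alpha -> 0 < sg -> `|z - y| <= V0 * sg ->
  alpha * `|z| <= y ^+ 2 / (4 * sg) + alpha * V0 * sg + alpha ^+ 2 * sg.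
Proof.
move=> a0 sg0 zy.
have z_le : alpha * `|z| <= alpha * `|y| + alpha * (V0 * sg).
  rewrite -mulrDr ler_wpM2l //.
  by have := ler_normD (z - y) y; rewrite subrK; lra.
have y2 : y ^+ 2 / (4 * sg) * (4 * sg) = `|y| ^+ 2.
  by rewrite real_normK ?num_real //; field; rewrite lt0r_neq0.
have := sqr_ge0 (`|y| - 2 * alpha * sg); have := normr_ge0 y; nra.
Qed.

Lemma heat_integrand_le {R : realType}
    (gamma alpha V0 x t tau xi_t xi_tau w : R) :
  0 <= alpha -> tau < t ->
  `|xi_tau - xi_t| <= V0 * (t - tau) -> `|w| <= V0 ->
  `|- (expR (- gamma * (t - tau)) * heatG x t xi_tau tau * w)| <=
    V0 / (2 * Num.sqrt pi) * expR (- (alpha * `|x - xi_t|)) / Num.sqrt (t - tau)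
      * expR (- (gamma - alpha * V0 - alpha ^+ 2) * (t - tau)).
Proof.
move=> a0 taut xi_le w_le; set sg := t - tau; set c := gamma - _ - _.
have sg0 : 0 < sg by rewrite subr_gt0.
have sqrt_pi0 : 0 < Num.sqrt (pi : R) by rewrite sqrtr_gt0 pi_gt0.
have sqrt_sg0 : 0 < Num.sqrt sg by rewrite sqrtr_gt0.
set P := (2 * Num.sqrt pi * Num.sqrt sg)^-1.
have P0 : 0 <= P by rewrite invr_ge0 !mulr_ge0 ?ltW.
have exp_le : expR (- gamma * sg) * expR (- (x - xi_tau) ^+ 2 / (4 * sg)) <=
    expR (- (alpha * `|x - xi_t|)) * expR (- c * sg).
  rewrite -!expRD ler_expR mulNr.
  have := weighted_norm_le_gauss_exponent V0 (x - xi_tau) (x - xi_t) a0 sg0.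
  rewrite (_ : x - xi_t - (x - xi_tau) = xi_tau - xi_t); last by ring.
  by move=> /(_ xi_le); rewrite /c; lra.
rewrite /heatG -/sg sqrt_4piM -/P; last exact: ltW.
rewrite normrN !normrM.
rewrite (ger0_norm (expR_ge0 _)) (ger0_norm P0) (ger0_norm (expR_ge0 _)).
rewrite (_ : _ * (P * _) * _ = P * ((expR (- gamma * sg) *
    expR (- (x - xi_tau) ^+ 2 / (4 * sg))) * `|w|)); last by ring.
rewrite (_ : V0 / _ * _ / _ * _ = P * ((expR (- (alpha * `|x - xi_t|)) *
    expR (- c * sg)) * V0)); last by rewrite /P; field; rewrite !lt0r_neq0.
by rewrite ler_wpM2l // ler_pM ?mulr_ge0 ?expR_ge0.
Qed.

Lemma abse_T1_le {R : realType} (gamma alpha V0 : R) (s v : R -> R) (x t : R) :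
  0 < t -> 0 <= alpha -> 0 < gamma - alpha * V0 - alpha ^+ 2 ->
  (forall tau, 0 < tau < t ->
     `|s tau - s t| <= V0 * (t - tau) /\ `|v tau| <= V0) ->
  (`|T1 gamma s v x t| <= (V0 / (2 * Num.sqrt (gamma - alpha * V0 - alpha ^+ 2))
                             * expR (- (alpha * `|x - s t|)))%:E)%E.
Proof.
move=> t0 a0 c0 sv; set c := gamma - _ - _.
have V00 : 0 <= V0.
  have t2 : 0 < t / 2 < t by apply/andP; split; lra.
  by have [_ v_le] := sv _ t2; exact: le_trans (normr_ge0 _) v_le.
set K := V0 / (2 * Num.sqrt pi) * expR (- (alpha * `|x - s t|)).
have sqrt_pi0 : 0 < Num.sqrt (pi : R) by rewrite sqrtr_gt0 pi_gt0.
have K0 : 0 <= K by rewrite mulr_ge0 ?expR_ge0 // divr_ge0 // mulr_ge0 // ltW.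
set I := fun tau => - (expR (- gamma * (t - tau)) * heatG x t (s tau) tau * v tau).
set Phi := fun tau => K / Num.sqrt (t - tau) * expR (- c * (t - tau)).
(* [v 0] is unconstrained, so [g] must dominate the integrand at [tau = 0]. *)
pose g tau := if tau \in `]0, t[ then Phi tau else `|I tau|.
have -> : V0 / (2 * Num.sqrt c) * expR (- (alpha * `|x - s t|)) =
    K * Num.sqrt pi / Num.sqrt c.
  by rewrite /K; field; rewrite !lt0r_neq0 ?sqrtr_gt0 ?pi_gt0.
apply: le_trans (@integral_sqrt_kernel_le R t c K t0 c0 K0 g _); last first.
  by move=> tau tau_in; rewrite /g tau_in.
apply: abse_integral_le => tau _; rewrite /g; case: ifPn => // /[!in_itv] tau_in.
have [s_le v_le] := sv tau tau_in; case/andP: tau_in => _ taut.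
exact: heat_integrand_le.
Qed.

Lemma decay_rate_ge_quarter {R : realType} {gamma v0 V0 alpha : R} :
  0 < v0 -> v0 <= V0 -> 0 <= alpha ->
  alpha < Num.min (v0 / 4) (gamma / (2 * V0)) ->
  gamma / 4 <= gamma - alpha * V0 - alpha ^+ 2.
Proof.
move=> v00 v0V0 a0; rewrite lt_min => /andP[a_v0 a_gamma].
have V00 : 0 < V0 by exact: lt_le_trans v0V0.
have : alpha * (2 * V0) < gamma by rewrite -ltr_pdivlMr // mulr_gt0.
have : alpha ^+ 2 <= alpha * (V0 / 4) by rewrite expr2 ler_wpM2l //; lra.
have : 0 <= alpha * V0 by rewrite mulr_ge0 // ltW.
nra.
Qed.

Theorem mainTheorem4 (R : realType) (gamma v0 V0 C alpha : R)
    (g u0 s v : R -> R) (u : R -> R -> R) :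
  0 < gamma -> 0 < v0 -> v0 <= V0 ->
  kinetics v0 V0 C g ->
  0 <= alpha -> alpha < Num.min (v0 / 4) (gamma / (2 * V0)) ->
  in_C_alpha alpha u0 ->
  free_interface_solution gamma g u0 s v u ->
  (forall t, 0 < t -> - V0 <= v t <= - v0) ->
  forall t, 0 < t -> forall x,
    ((expR (alpha * `|x - s t|))%:E * `| T1 gamma s v x t | <= (V0 / Num.sqrt gamma)%:E)%E.
Proof.
move=> gamma0 v00 v0V0 _ a0 a_lt _ [_ [s_cont [s_der _]]] v_bd t t0 x.
have c_ge := decay_rate_ge_quarter v00 v0V0 a0 a_lt.
set c := gamma - _ - _ in c_ge *; have c0 : 0 < c by lra.
have v_le tau : 0 < tau -> `|v tau| <= V0.
  by move=> /v_bd /andP[? ?]; rewrite ler_norml; apply/andP; split; lra.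
have sv tau : 0 < tau < t -> `|s tau - s t| <= V0 * (t - tau) /\ `|v tau| <= V0.
  case/andP=> tau0 taut; split; last exact: v_le.
  rewrite distrC; apply: MVT_norm_le => // [|y /andP[tau_y _]].
    by apply: continuous_subspaceW s_cont => y /=; rewrite in_itv /=; lra.
  have y0 := lt_trans tau0 tau_y.
  by have [? ->] := s_der y y0; split => //; exact: v_le.
apply: le_trans (lee_wpmul2l _ (abse_T1_le gamma alpha V0 s v x t t0 a0 c0 sv)) _.
  by rewrite lee_fin expR_ge0.
rewrite -EFinM lee_fin mulrCA -expRD addrN expR0 mulr1.
have sqrt_gamma_le : Num.sqrt gamma <= 2 * Num.sqrt c.
  have := sqr_sqrtr (ltW gamma0); have := sqr_sqrtr (ltW c0).
  by have := sqrtr_ge0 gamma; have := sqrtr_ge0 c; nra.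
have V00 : 0 <= V0 by lra.
by rewrite -/c ler_wpM2l // lef_pV2 ?posrE ?mulr_gt0 ?sqrtr_gt0.
Qed.
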